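(* Let $f_1,\dots,f_n:\mathbb{R}^d\to\mathbb{R}$ be such that each $f_i$ is $L_i$-smooth and has a minimizer $x_i$, let $\alpha_1,\dots,\alpha_n\in(0,1)$ and $\tilde f(x) = \frac{1}{n}\sum_{i=1}^n f_i(\alpha_i x + (1-\alpha_i)x_i)$. Then for every $x\in\mathbb{R}^d$, \[ \|\nabla \tilde f(x)\| \leq \frac{1}{n}\sum_{i=1}^n \alpha_i^2 L_i\|x - x_i\| \quad\text{and}\quad \tilde f(x) \leq \frac{1}{n}\sum_{i=1}^n f_i(x_i) + \frac{1}{2n}\sum_{i=1}^n\alpha_i^2 L_i\|x-x_i\|^2. \]
   Context: A differentiable $g$ is $L$-smooth if $\|\nabla g(x)-\nabla g(y)\|\leq L\|x-y\|$ for all $x,y$. *)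

From HB Require Import structures.
From mathcomp Require Import all_boot all_order all_algebra.
From mathcomp Require Import all_classical all_reals all_analysis.
Set Implicit Arguments. Unset Strict Implicit. Unset Printing Implicit Defensive.
Import Order.TTheory GRing.Theory Num.Theory.
Import numFieldNormedType.Exports.
Local Open Scope ring_scope.

(* Euclidean norm on R^d. (The library's canonical norm on matrices is the
   sup norm, so we define the Euclidean one explicitly.) *)
Definition enorm {R : realType} {d : nat} (v : 'rV[R]_d) : R :=
  Num.sqrt (\sum_(j < d) v ord0 j ^+ 2).

Definition grad {R : realType} {d : nat} (g : 'rV[R]_d -> R) (x : 'rV[R]_d)
  : 'rV[R]_d :=
  \row_(j < d) 'D_(delta_mx ord0 j) g x.

Definition Lsmooth {R : realType} {d : nat} (L : R) (g : 'rV[R]_d -> R) : Prop :=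
  (forall x, differentiable g x) /\
  (forall x y, enorm (grad g x - grad g y) <= L * enorm (x - y)).

Definition is_minimizer {R : realType} {d : nat} (g : 'rV[R]_d -> R)
  (x : 'rV[R]_d) : Prop := forall y, g x <= g y.

Definition ftilde {R : realType} {d n : nat} (f : 'I_n -> 'rV[R]_d -> R)
  (alpha : 'I_n -> R) (xs : 'I_n -> 'rV[R]_d) (x : 'rV[R]_d) : R :=
  n%:R^-1 * \sum_(i < n) f i (alpha i *: x + (1 - alpha i) *: xs i).

From HB Require Import structures.
From mathcomp Require Import all_boot all_order all_algebra.
From mathcomp Require Import all_classical all_reals all_analysis.
From mathcomp Require Import ring lra.
Import Order.TTheory GRing.Theory Num.Theory.
Import numFieldNormedType.Exports.
Local Open Scope ring_scope.

(* Each summand of [ftilde] is f_i composed with the contraction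
   y_i = alpha_i x + (1 - alpha_i) x_i towards the minimizer x_i, so its gradient
   at x is alpha_i grad f_i (y_i), and y_i - x_i = alpha_i (x - x_i).  As
   grad f_i (x_i) = 0, L_i-smoothness gives |grad f_i (y_i)| <= L_i |y_i - x_i|,
   and the descent lemma f(q) <= f(p) + <grad f(p), q - p> + L/2 |q - p|^2 gives
   the bound on the values.  The descent lemma follows from the Lipschitz bound on
   the derivative of t |-> f(p + t (q - p)) by monotonicity of
   t |-> g(t) - b t - c t^2 / 2 on [0, 1]. *)

Section EuclideanNorm.
Context {R : realType} {d : nat}.
Implicit Types (u v w : 'rV[R]_d) (a : R).

Definition edot u v : R := \sum_(j < d) u ord0 j * v ord0 j.

Lemma edotC u v : edot u v = edot v u.
Proof. by apply: eq_bigr => j _; rewrite mulrC. Qed.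

Lemma edotDl u v w : edot (u + v) w = edot u w + edot v w.
Proof. by rewrite -big_split; apply: eq_bigr => j _; rewrite !mxE mulrDl. Qed.

Lemma edotZl a u v : edot (a *: u) v = a * edot u v.
Proof. by rewrite mulr_sumr; apply: eq_bigr => j _; rewrite !mxE mulrA. Qed.

Lemma edotDr u v w : edot w (u + v) = edot w u + edot w v.
Proof. by rewrite edotC edotDl !(edotC w). Qed.

Lemma edotZr a u v : edot v (a *: u) = a * edot v u.
Proof. by rewrite edotC edotZl edotC. Qed.

Lemma edot0l v : edot 0 v = 0.
Proof. by rewrite -(scale0r 0) edotZl mul0r. Qed.

Lemma edotvv_ge0 u : 0 <= edot u u.
Proof. by apply: sumr_ge0 => j _; rewrite -expr2 sqr_ge0. Qed.

Lemma edotvv_eq0 u : edot u u = 0 -> u = 0.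
Proof.
move/eqP; rewrite psumr_eq0 => [/allP u0|j _]; last by rewrite -expr2 sqr_ge0.
apply/rowP => j; rewrite mxE; apply/eqP; rewrite -sqrf_eq0 expr2.
exact: u0 (mem_index_enum j).
Qed.

Lemma edot_sqr_le u v : edot u v ^+ 2 <= edot u u * edot v v.
Proof.
have [/edotvv_eq0 -> | v_neq0] := eqVneq (edot v v) 0.
  by rewrite edotC !edot0l expr0n mulr0.
have v_gt0 : 0 < edot v v by rewrite lt0r v_neq0 edotvv_ge0.
(* 0 <= |<v,v> u - <u,v> v|^2 = <v,v> (<u,u><v,v> - <u,v>^2) *)
have := edotvv_ge0 (edot v v *: u - edot u v *: v).
rewrite -scaleNr !edotDl !edotDr !edotZl !edotZr (edotC v u).
by nra.
Qed.

Lemma enormE u : enorm u = Num.sqrt (edot u u).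
Proof. by rewrite /enorm /edot; under eq_bigr do rewrite expr2. Qed.

Lemma enorm_ge0 u : 0 <= enorm u.
Proof. exact: sqrtr_ge0. Qed.

Lemma enorm_sqr u : enorm u ^+ 2 = edot u u.
Proof. by rewrite enormE sqr_sqrtr // edotvv_ge0. Qed.

Lemma edot_le_enorm u v : edot u v <= enorm u * enorm v.
Proof.
rewrite !enormE -sqrtrM ?edotvv_ge0 // (le_trans (ler_norm _)) //.
by rewrite -sqrtr_sqr ler_sqrt ?mulr_ge0 ?edotvv_ge0 // edot_sqr_le.
Qed.

Lemma enormZ a u : enorm (a *: u) = `|a| * enorm u.
Proof.
by rewrite !enormE edotZl edotZr mulrA -expr2 sqrtrM ?sqr_ge0 // sqrtr_sqr.
Qed.

Lemma ler_enormD u v : enorm (u + v) <= enorm u + enorm v.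
Proof.
rewrite -(ler_pXn2r (_ : 0 < 2)%N) ?nnegrE ?addr_ge0 ?enorm_ge0 //.
rewrite sqrrD !enorm_sqr edotDl !edotDr (edotC v u).
by have := edot_le_enorm u v; lra.
Qed.

Lemma ler_enorm_sum n (F : 'I_n -> 'rV[R]_d) :
  enorm (\sum_(i < n) F i) <= \sum_(i < n) enorm (F i).
Proof.
elim/big_ind2 : _ => [|u1 u2 r1 r2 le1 le2|//].
  by rewrite enormE edot0l sqrtr0.
exact: le_trans (ler_enormD _ _) (lerD le1 le2).
Qed.

End EuclideanNorm.

Section DeriveAlongLine.
Context {R : realType} {U V W : normedModType R}.
Variables (f : V -> W) (g : U -> V) (x w : U) (u : V).
Hypothesis g_line : forall h : R, g (h *: w + x) = h *: u + g x.

Let quotientE : (fun h : R => h^-1 *: ((f \o g) (h *: w + x) - (f \o g) x)) =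
  (fun h : R => h^-1 *: (f (h *: u + g x) - f (g x))).
Proof. by apply/funext => h /=; rewrite g_line. Qed.

Lemma derive_comp_line : 'D_w (f \o g) x = 'D_u f (g x).
Proof. by rewrite /derive quotientE. Qed.

Lemma derivable_comp_line : derivable f (g x) u -> derivable (f \o g) x w.
Proof. by rewrite /derivable quotientE. Qed.

End DeriveAlongLine.

Lemma le_of_derive_le_affine {R : realType} (g : R -> R) (b c : R) :
  (forall t, derivable g t 1) ->
  (forall t, 0 < t < 1 -> 'D_1 g t <= b + c * t) ->
  g 1 <= g 0 + b + c / 2.
Proof.
move=> dg g'_le.
have algR (k : R) : k%:A = k by exact: mulr1.
pose h := g - (b *: @id R + (c / 2) *: (@id R) ^+ 2).
have dh (t : R) : is_derive t (1 : R) h ('D_1 g t - (b + c * t)).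
  apply: is_derive_eq; first exact: is_deriveB.
  by rewrite /= expr1 !algR -[_ *: _]/(c / 2 * (2 * t)); congr (_ - (_ + _)); field.
have h_derivable (t : R) : derivable h t 1 by have [] := dh t.
have : h 1 <= h 0.
  apply: (ler0_derive1_nincr (fun t _ => h_derivable t)) => //; last first.
    exact: derivable_within_continuous (fun t _ => h_derivable t).
  move=> t; rewrite in_itv /= => t01.
  by rewrite derive1E derive_val subr_le0 g'_le.
rewrite /h !fctE expr1n expr0n /= !scaler0 !algR; lra.
Qed.

Section Gradient.
Context {R : realType} {d : nat}.
Implicit Types (f : 'rV[R]_d -> R) (p v x : 'rV[R]_d).

Let line_shift p v (t h : R) : (h%:A + t) *: v + p = h *: v + (t *: v + p).
Proof. by rewrite [h%:A]mulr1 scalerDl addrA. Qed.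

Let affine_shift (a : R) (c x v : 'rV[R]_d) (h : R) :
  a *: (h *: v + x) + c = h *: (a *: v) + (a *: x + c).
Proof. by rewrite scalerDr !scalerA mulrC addrA. Qed.

Lemma derive_grad f p v : differentiable f p -> 'D_v f p = edot (grad f p) v.
Proof.
move=> df; rewrite deriveE // {1}(row_sum_delta v) linear_sum.
by apply: eq_bigr => j _; rewrite linearZ /= /grad mxE -deriveE // mulrC.
Qed.

Lemma derivable_line f p v (t : R) :
  differentiable f (t *: v + p) -> derivable (fun s : R => f (s *: v + p)) t 1.
Proof.
move=> df; apply: (derivable_comp_line f (fun s : R => s *: v + p) t 1 v).
  exact: line_shift.
exact: diff_derivable.
Qed.

Lemma derive_line f p v (t : R) :
  'D_1 (fun s : R => f (s *: v + p)) t = 'D_v f (t *: v + p).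
Proof.
exact: (derive_comp_line f (fun s : R => s *: v + p) t 1 v (line_shift p v t)).
Qed.

Lemma derivable_comp_affine f (a : R) (c x v : 'rV[R]_d) :
  differentiable f (a *: x + c) -> derivable (fun y => f (a *: y + c)) x v.
Proof.
move=> df; apply: (derivable_comp_line f (fun y => a *: y + c) x v (a *: v)).
  exact: affine_shift.
exact: diff_derivable.
Qed.

Lemma grad_comp_affine f (a : R) (c x : 'rV[R]_d) :
  differentiable f (a *: x + c) ->
  grad (fun y => f (a *: y + c)) x = a *: grad f (a *: x + c).
Proof.
move=> df; apply/rowP => j; rewrite !mxE.
rewrite (derive_comp_line f (fun y => a *: y + c) x _ (a *: delta_mx ord0 j)).
  by rewrite !derive_grad // edotZr.
exact: affine_shift.
Qed.

Lemma grad_scale_sum n (F : 'I_n -> 'rV[R]_d -> R) (k : R) x :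
  (forall i v, derivable (F i) x v) ->
  grad (fun y => k * \sum_(i < n) F i y) x = k *: \sum_(i < n) grad (F i) x.
Proof.
move=> dF; have -> : (fun y => k * \sum_(i < n) F i y) = k \*: \sum_(i < n) F i.
  by apply/funext => y; rewrite /= fct_sumE.
apply/rowP => j; rewrite !mxE deriveZ; last exact: derivable_sum.
by rewrite derive_sum // summxE; congr (_ * _); apply: eq_bigr => i _; rewrite mxE.
Qed.

Lemma grad_eq0_at_min f p :
  (forall x, differentiable f x) -> is_minimizer f p -> grad f p = 0.
Proof.
move=> df p_min; apply/rowP => j; rewrite !mxE.
have := @derive1_at_min R (fun s : R => f (s *: delta_mx ord0 j + p)) (-1) 1 0.
case=> //.
- by move=> t _; apply: derivable_line.
- by rewrite in_itv /= ltrN10 ltr01.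
- by move=> t _; rewrite scale0r add0r p_min.
by move=> _; rewrite derive_line scale0r add0r.
Qed.

Lemma Lsmooth_descent (L : R) f p q : Lsmooth L f ->
  f q <= f p + edot (grad f p) (q - p) + L / 2 * enorm (q - p) ^+ 2.
Proof.
move=> [df f_lip]; set v := q - p.
have := le_of_derive_le_affine (fun s : R => f (s *: v + p))
  (edot (grad f p) v) (L * enorm v ^+ 2).
rewrite scale1r scale0r add0r /v subrK mulrAC; apply.
  by move=> t; apply: derivable_line.
move=> t /andP[t_gt0 _]; rewrite derive_line derive_grad //.
rewrite -[grad f _](subrK (grad f p)) edotDl addrC lerD2l.
apply: le_trans (edot_le_enorm _ _) _.
apply: le_trans (ler_wpM2r (enorm_ge0 v) (f_lip _ p)) _.
by rewrite addrK enormZ gtr0_norm // expr2; nra.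
Qed.

End Gradient.

Section ShrunkAverage.
Context {R : realType} {d n : nat}.
Variables (f : 'I_n -> 'rV[R]_d -> R) (L : 'I_n -> R).
Variables (xs : 'I_n -> 'rV[R]_d) (alpha : 'I_n -> R).
Hypothesis f_smooth : forall i, Lsmooth (L i) (f i).
Hypothesis xs_min : forall i, is_minimizer (f i) (xs i).

Let shrink i x := alpha i *: x + (1 - alpha i) *: xs i.

Let shrink_subE i x : shrink i x - xs i = alpha i *: (x - xs i).
Proof. by rewrite /shrink scalerBl scale1r scalerBr addrA addrAC addrK. Qed.

Let grad_f_min i : grad (f i) (xs i) = 0.
Proof. exact: grad_eq0_at_min (f_smooth i).1 (xs_min i). Qed.

Lemma grad_ftilde x :
  grad (ftilde f alpha xs) x
    = n%:R^-1 *: \sum_(i < n) alpha i *: grad (f i) (shrink i x).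
Proof.
rewrite grad_scale_sum => [|i v]; last exact/derivable_comp_affine/(f_smooth i).1.
congr (_ *: _); apply: eq_bigr => i _.
by rewrite grad_comp_affine //; apply: (f_smooth i).1.
Qed.

Lemma enorm_grad_ftilde_le x :
  enorm (grad (ftilde f alpha xs) x)
    <= n%:R^-1 * \sum_(i < n) alpha i ^+ 2 * L i * enorm (x - xs i).
Proof.
have n_inv_ge0 : 0 <= n%:R^-1 :> R by rewrite invr_ge0 ler0n.
rewrite grad_ftilde enormZ ger0_norm // ler_wpM2l //.
apply: le_trans (ler_enorm_sum _ _) (ler_sum _ _) => i _.
have := (f_smooth i).2 (shrink i x) (xs i).
rewrite grad_f_min subr0 shrink_subE !enormZ => grad_le.
apply: le_trans (ler_wpM2l (normr_ge0 _) grad_le) _.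
by rewrite -(real_normK (num_real (alpha i))) expr2; nra.
Qed.

Lemma ftilde_le x :
  ftilde f alpha xs x
    <= n%:R^-1 * \sum_(i < n) f i (xs i)
       + (2 * n%:R)^-1 * \sum_(i < n) alpha i ^+ 2 * L i * enorm (x - xs i) ^+ 2.
Proof.
rewrite /ftilde invfM [2^-1 / _]mulrC -mulrA -mulrDr ler_wpM2l ?invr_ge0 ?ler0n //.
rewrite mulr_sumr -big_split.
apply: ler_sum => i _.
apply: le_trans (Lsmooth_descent _ _ (xs i) (shrink i x) (f_smooth i)) _.
rewrite grad_f_min edot0l addr0 lerD2l shrink_subE enormZ exprMn.
by rewrite -(real_normK (num_real (alpha i))); nra.
Qed.

End ShrunkAverage.

Theorem lemma1 (R : realType) (d n : nat)
  (f : 'I_n -> 'rV[R]_d -> R) (L : 'I_n -> R) (xs : 'I_n -> 'rV[R]_d)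
  (alpha : 'I_n -> R)
  (hsmooth : forall i, Lsmooth (L i) (f i))
  (hmin : forall i, is_minimizer (f i) (xs i))
  (halpha : forall i, 0 < alpha i < 1) :
  forall x : 'rV[R]_d,
    enorm (grad (ftilde f alpha xs) x)
      <= n%:R^-1 * \sum_(i < n) alpha i ^+ 2 * L i * enorm (x - xs i)
    /\
    ftilde f alpha xs x
      <= n%:R^-1 * \sum_(i < n) f i (xs i)
         + (2 * n%:R)^-1 * \sum_(i < n) alpha i ^+ 2 * L i * enorm (x - xs i) ^+ 2.
Proof.
move=> x; split; first exact: enorm_grad_ftilde_le.
exact: ftilde_le.
Qed.
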